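(* Let $V$ be a vertex algebra, $M_1,M_2,M_3$ be $V$-modules and $\mathcal{Y}$ an intertwining operator of type $\binom{M_3}{M_1\ M_2}$. Then for all $v\in V$, $a\in M_1$, $b\in M_2$: (v) $[v_\lambda(a\cdot b)]=a\cdot[v_\lambda b]+[v_\lambda a]\cdot b+\int_0^\lambda[[v_\lambda a]_\mu b]^0\,d\mu$; (vi) $[(v\cdot a)_\lambda b]=(e^{T\partial_\lambda}v)[a_\lambda b]+(e^{T\partial_\lambda}a)[v_\lambda b]+\int_0^\lambda[a_\mu[v_{\lambda-\mu}b]]\,d\mu$; (vii) $[a_\lambda(v\cdot b)]=v\cdot[a_\lambda b]+[a_\lambda v]\cdot b+\int_0^\lambda[[a_\lambda v]_\mu b]\,d\mu$.
   Context: Notation: for $n\in\mathbb{C}$, $\lambda^{(n)}:=\lambda^n/\Gamma(n+1)$ with $1/\Gamma$ the entire reciprocal Gamma function (so $\lambda^{(n)}=0$ for $n\in\mathbb{Z}_{<0}$, $\lambda^{(n)}=\lambda^n/n!$ for $n\in\mathbb{Z}_{\ge0}$); $T^{(j)}:=T^j/j!$. Fix $S\subset\mathbb{C}$ with $S+\mathbb{Z}=S$, $S/\mathbb{Z}$ finite; $U[[z]]z^{-S}$ denotes formal sums $\sum_nf_nz^n$ with $n$ in a finite union of sets $-d+\mathbb{Z}_{\ge0}$, $d\in S$; the formal Fourier transform is $F^\lambda_z(\sum_nu_nz^{-n-1})=\sum_nu_n\lambda^{(n)}$. A vertex algebra $V$ has vacuum $\mathbf 1$, fields $Y(v,z)=\sum_{n\in\mathbb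 Z}v_{(n)}z^{-n-1}$ and translation operator $T$. A $V$-module is a vector space $M$ with $T\in\mathrm{End}(M)$ and $Y^M(v,z)=\sum_{n\in\mathbb Z}v_{(n)}z^{-n-1}\in\mathrm{Hom}(M,M((z)))$ such that $Y^M(\mathbf 1,z)=\mathrm{id}_M$, $[T,Y^M(v,z)]=\partial_zY^M(v,z)$, and the Borcherds identity below holds with $\mathcal Y=Y^M$ and $k\in\mathbb Z$. An intertwining operator of type $\binom{M_3}{M_1\ M_2}$ is a linear map $M_1\to\mathrm{Hom}(M_2,M_3[[z]]z^{-S})$, $a\mapsto\mathcal Y(a,z)=\sum_{n\in\mathbb C}a_{(n)}z^{-n-1}$, such that (I1) $T\mathcal Y(a,z)-\mathcal Y(a,z)T=\mathcal Y(Ta,z)=\partial_z\mathcal Y(a,z)$, and (I2) for all $v\in V,a\in M_1,b\in M_2$, $n,m\in\mathbb Z$, $k\in\mathbb C$: $\sum_{j\ge0}(-1)^j\binom nj\big(v_{(m+n-j)}a_{(k+j)}b-(-1)^na_{(n+k-j)}v_{(m+j)}b\big)=\sum_{j\ge0}\binom mj(v_{(n+j)}a)_{(m+k-j)}b$. Brackets and products: for a $V$-module $M$, $v\in V$, $c\in M$: $[v_\lambda c]:=\sum_{j\in\mathbb Z_{\ge0}}\lambda^{(j)}v_{(j)}c$ and $v\cdot c:=v_{(-1)}c$. For $a\in M_1,b\in M_2$: $[a_\lambda b]:=F^\lambda_z(\mathcal Y(a,z)b)=\sum_{n\in\mathbb C}\lambda^{(n)}a_{(n)}b$, $[a_\lambda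 b]^0:=\sum_{n\in\mathbb Z_{\ge0}}\lambda^{(n)}a_{(n)}b$, and $a\cdot b:=a_{(-1)}b$. All brackets and products are extended coefficientwise to expressions depending polynomially or as series on auxiliary variables; e.g. $[v_{\lambda-\mu}b]:=\sum_{j\ge0}(\lambda-\mu)^{(j)}v_{(j)}b$ with $(\lambda-\mu)^{(j)}=(\lambda-\mu)^j/j!$. For $x\in V$ or $x\in M_1$ and an expression $P(\lambda)$: $(e^{T\partial_\lambda}x)P(\lambda):=\sum_{j\ge0}(T^{(j)}x)\cdot\partial_\lambda^jP(\lambda)$. $[a_\lambda v]:=-[v_{-\lambda-T}a]:=-\sum_{j\ge0}\frac{(-\lambda-T)^j}{j!}(v_{(j)}a)\in M_1[\lambda]$, with $T$ acting on $M_1$. The formal integral $\int_0^\lambda\cdot\,d\mu$ acts on formal linear combinations of powers $\mu^c$ ($c\in\mathbb C$) with coefficients possibly depending on $\lambda$ (treated as constants; polynomial factors in $\lambda-\mu$ are expanded first): $\int_0^\lambda\mu^{(c)}d\mu:=\lambda^{(c+1)}$ for $c\in\mathbb C\setminus\mathbb Z_{<0}$, and $\int_0^\lambda\mu^cd\mu:=0$ for $c\in\mathbb Z_{<0}$. *)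

From mathcomp Require Import all_boot all_order all_algebra.
From mathcomp Require Import classical_sets boolp fsbigop.
From mathcomp Require Import complex.
From mathcomp Require Import Rstruct.
Set Implicit Arguments.
Unset Strict Implicit.
Unset Printing Implicit Defensive.
Import GRing.Theory.
Local Open Scope ring_scope.

Definition CC : numClosedFieldType := (Rdefinitions.R)[i].

(* Sum over j : nat of a finitely supported family (all sums used below are
   finite by the truncation conditions; by convention the value is 0 if the
   support is infinite). *)
Definition fsum (M : zmodType) (f : nat -> M) : M := \sum_(j \in [set: nat]) f j.

Definition gbinom (x : CC) (j : nat) : CC :=
  (\prod_(i < j) (x - i%:R)) / (j`!)%:R.

Definition lin (A B : lmodType CC) (f : A -> B) : Prop :=
  forall (s : CC) (x y : A), f (s *: x + y) = s *: f x + f y.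

Definition Tdiv (A : lmodType CC) (T : A -> A) (j : nat) (x : A) : A :=
  (j`!%:R)^-1 *: iter j T x.

Definition negint (c : CC) : Prop := exists k : nat, c = - (k.+1)%:R.

(* Vertex algebras, modules, intertwining operators.
   Modes:  Y v n u = v_(n) u, i.e. Y(v,z) = sum_n v_(n) z^{-n-1}. *)

Definition borcherds_int (V M : lmodType CC)
    (Y : V -> int -> V -> V) (YM : V -> int -> M -> M) : Prop :=
  forall (v a : V) (c : M) (n m k : int),
    fsum (fun j : nat =>
      ((-1) ^+ j * gbinom n%:~R j) *:
        (YM v (m + n - j%:Z) (YM a (k + j%:Z) c)
         - (-1 : CC) ^ n *: YM a (n + k - j%:Z) (YM v (m + j%:Z) c)))
    = fsum (fun j : nat => gbinom m%:~R j *: YM (Y v (n + j%:Z) a) (m + k - j%:Z) c).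

Definition is_vertex_algebra (V : lmodType CC) (vac : V) (T : V -> V)
    (Y : V -> int -> V -> V) : Prop :=
  [/\
      lin T,
      (forall (n : int) (u : V), lin (fun v => Y v n u)),
      (forall (n : int) (v : V), lin (Y v n)),
      (* Y(v,z)u in V((z)) *)
      (forall v u : V, exists N : int, forall n : int, (N <= n)%R -> Y v n u = 0) &
    [/\ (* vacuum axioms: Y(vac,z) = id, Y(v,z)vac = v + O(z), T vac = 0 *)
      (forall (n : int) (u : V), Y vac n u = if n == (-1)%R then u else 0),
      (forall v : V, Y v (-1) vac = v /\ forall n : int, (0 <= n)%R -> Y v n vac = 0),
      T vac = 0,
      (* translation covariance [T, Y(v,z)] = d/dz Y(v,z) *)
      (forall (v u : V) (n : int), T (Y v n u) - Y v n (T u) = - n%:~R *: Y v (n - 1) u)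
    &
      borcherds_int Y Y]].

Definition is_va_module (V : lmodType CC) (vac : V) (Y : V -> int -> V -> V)
    (M : lmodType CC) (TM : M -> M) (YM : V -> int -> M -> M) : Prop :=
  [/\ lin TM,
      (forall (n : int) (c : M), lin (fun v => YM v n c)),
      (forall (n : int) (v : V), lin (YM v n)),
      (forall (v : V) (c : M), exists N : int, forall n : int, (N <= n)%R -> YM v n c = 0) &
    [/\ (forall (n : int) (c : M), YM vac n c = if n == (-1)%R then c else 0),
      (forall (v : V) (c : M) (n : int),
         TM (YM v n c) - YM v n (TM c) = - n%:~R *: YM v (n - 1) c)
    & borcherds_int Y YM]].

Definition admissible_exponents (S : set CC) : Prop :=
  (forall (s : CC) (z : int), S s -> S (s + z%:~R)) /\
  (exists L : seq CC, forall s, S s -> exists2 d, d \in L & exists z : int, s = d + z%:~R).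

(* Intertwining operator Y of type (M3 / M1 M2):
   io a n b = a_(n) b  (n in C), i.e. Y(a,z)b = sum_n a_(n) b z^{-n-1}. *)
Definition is_intertwining (S : set CC) (V : lmodType CC)
    (M1 M2 M3 : lmodType CC)
    (T1 : M1 -> M1) (T2 : M2 -> M2) (T3 : M3 -> M3)
    (Y1 : V -> int -> M1 -> M1) (Y2 : V -> int -> M2 -> M2) (Y3 : V -> int -> M3 -> M3)
    (io : M1 -> CC -> M2 -> M3) : Prop :=
  [/\
      (forall (n : CC) (b : M2), lin (fun a => io a n b)),
      (forall (n : CC) (a : M1), lin (io a n)),
      (* Y(a,z)b in M3[[z]]z^{-S}: the exponents -n-1 of z with a_(n)b <> 0
         lie in a finite union of sets -d + Z_{>=0}, d in S *)
      (forall (a : M1) (b : M2), exists ds : seq CC, (forall d, d \in ds -> S d) /\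
         forall n : CC, io a n b != 0 ->
           exists2 d, d \in ds & exists k : nat, (- n - 1) = - d + k%:R),
      (forall (a : M1) (b : M2) (n : CC),
         T3 (io a n b) - io a n (T2 b) = io (T1 a) n b /\
         io (T1 a) n b = - n *: io a (n - 1) b)
    &
      (forall (v : V) (a : M1) (b : M2) (n m : int) (k : CC),
        fsum (fun j : nat =>
          ((-1) ^+ j * gbinom n%:~R j) *:
            (Y3 v (m + n - j%:Z) (io a (k + j%:R) b)
             - (-1 : CC) ^ n *: io a (n%:~R + k - j%:R) (Y2 v (m + j%:Z) b)))
        = fsum (fun j : nat => gbinom m%:~R j *: io (Y1 v (n + j%:Z) a) (m%:~R + k - j%:R) b))].

(* A formal expression  sum_{c in C} F(c) lambda^{(c)}  (values in M) is represented
   by its coefficient function  F : CC -> M.  Since lambda^{(c)} = 0 for c a negative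
   integer and the lambda^{(c)}, c not a negative integer, are linearly independent,
   two expressions are equal iff their coefficients agree off the negative integers. *)
Definition lexpr (M : lmodType CC) := CC -> M.

Definition lexpr_eq (M : lmodType CC) (F G : lexpr M) : Prop :=
  forall c : CC, ~ negint c -> F c = G c.

(* A polynomial  sum_{j>=0} P(j) lambda^{(j)}  seen as a formal expression *)
Definition lpoly (M : lmodType CC) (P : nat -> M) : lexpr M :=
  fun c => fsum (fun j : nat => if c == j%:R then P j else 0).

(* Two-variable expressions  sum_{i in N, d in C} G(i,d) lambda^{(i)} mu^{(d)}
   (polynomial in lambda).  Formal integral  int_0^lambda . dmu :
   lambda^{(i)} mu^{(d)} |-> lambda^{(i)} lambda^{(d+1)} = binom(d+1+i, i) lambda^{(d+1+i)}
   for d not a negative integer, and |-> 0 for d a negative integer. *)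
Definition lint (M : lmodType CC) (G : nat -> CC -> M) : lexpr M :=
  fun c => fsum (fun i : nat =>
    if `[< negint (c - 1 - i%:R) >] then 0 else gbinom c i *: G i (c - 1 - i%:R)).

(* Brackets.  [v_lambda c] = sum_{j>=0} lambda^{(j)} v_(j) c  (polynomial part) *)
Definition vbr (V M : lmodType CC) (YM : V -> int -> M -> M) (v : V) (c : M) : nat -> M :=
  fun j => YM v j%:Z c.

(* [a_lambda b] = sum_{n in C} lambda^{(n)} a_(n) b *)
Definition iobr (M1 M2 M3 : lmodType CC) (io : M1 -> CC -> M2 -> M3)
    (a : M1) (b : M2) : lexpr M3 :=
  fun c => io a c b.

(* [a_lambda b]^0 = sum_{n in Z>=0} lambda^{(n)} a_(n) b *)
Definition iobr0 (M1 M2 M3 : lmodType CC) (io : M1 -> CC -> M2 -> M3)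
    (a : M1) (b : M2) : nat -> M3 :=
  fun n => io a n%:R b.

(* [a_lambda v] := - [v_{-lambda-T} a] = - sum_j (-lambda-T)^j/j! (v_(j) a)
   = sum_i lambda^{(i)} ( - sum_l (-1)^(i+l) T^{(l)} v_(i+l) a ) *)
Definition abr_v (V M1 : lmodType CC) (T1 : M1 -> M1) (Y1 : V -> int -> M1 -> M1)
    (a : M1) (v : V) : nat -> M1 :=
  fun i => - fsum (fun l : nat => (-1) ^+ (i + l) *: Tdiv T1 l (Y1 v (i + l)%N%:Z a)).

(* [v_{lambda-mu} b] expanded in lambda^{(i)} mu^{(k)}:
   (lambda-mu)^{(j)} = sum_{i+k=j} lambda^{(i)} (-1)^k mu^{(k)} *)
Definition vbr_lm (V M : lmodType CC) (YM : V -> int -> M -> M) (v : V) (b : M)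
    : nat -> nat -> M :=
  fun i k => (-1) ^+ k *: YM v (i + k)%N%:Z b.

(* [a_mu X] for X polynomial in lambda, mu (coefficients X i k at lambda^{(i)} mu^{(k)}),
   using mu^{(k)} mu^{(e)} = binom(e+k, k) mu^{(e+k)} *)
Definition iobr_mu (M1 M2 M3 : lmodType CC) (io : M1 -> CC -> M2 -> M3)
    (a : M1) (X : nat -> nat -> M2) : nat -> CC -> M3 :=
  fun i e => fsum (fun k : nat => gbinom e k *: io a (e - k%:R) (X i k)).

(* (e^{T d_lambda} x) F  =  sum_j (T^{(j)} x) . d_lambda^j F ,  d_lambda lambda^{(c)} = lambda^{(c-1)} *)
Definition eTd (X Y Z : lmodType CC) (T : X -> X) (prod : X -> Y -> Z)
    (x : X) (F : lexpr Y) : lexpr Z :=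
  fun c => fsum (fun j : nat => prod (Tdiv T j x) (F (c + j%:R))).

(* Each identity is an instance of the Borcherds identity (I2) of the intertwining
   operator: (v) and (vii) are the commutator formula (n = 0, at (m, k) = (j, -1) and
   (-1, c)), and (vi) is the case n = -1, m = 0.  At the coefficient of lambda^(c) this
   writes the left-hand side as a finite sum over p of terms W p (c - 1 - p).  Those
   with c - 1 - p a negative integer form the polynomial part, and the others are
   exactly what the formal integral produces, by the binomial identity
   sum_(i <= p) binom(c, i) binom(c - 1 - i, p - i) (-1)^(p - i) = 1. *)

From mathcomp Require Import all_boot all_order all_algebra.
From mathcomp Require Import classical_sets boolp fsbigop.
From mathcomp Require Import complex.
From mathcomp Require Import Rstruct.
From mathcomp Require Import ring zify.
Import Num.Theory GRing.Theory.
Local Open Scope ring_scope.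

Lemma fsumE (M : zmodType) (f : nat -> M) (N : nat) :
  (forall j, (N <= j)%N -> f j = 0) -> fsum f = \sum_(j < N) f j.
Proof.
move=> f0; rewrite /fsum fsbig_ord; apply/esym/fsbig_widen => // j [_ /=].
by move/negP; rewrite -leqNgt => /f0.
Qed.

Lemma fsum_single (M : zmodType) (f : nat -> M) (j0 : nat) :
  (forall j, j <> j0 -> f j = 0) -> fsum f = f j0.
Proof.
move=> f0; rewrite (@fsumE _ _ j0.+1) => [|j]; last by move/gtn_eqF/eqP/f0.
rewrite big_ord_recr /= big1 ?add0r // => i _; apply: f0.
by move=> i_j0; have := ltn_ord i; rewrite i_j0 ltnn.
Qed.

Lemma fsum_eq0 (M : zmodType) (f : nat -> M) : (forall j, f j = 0) -> fsum f = 0.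
Proof. by move=> f0; rewrite (@fsumE _ _ 0) ?big_ord0. Qed.

Lemma natS_neq0 n : n.+1%:R != 0 :> CC.
Proof. by rewrite pnatr_eq0. Qed.

Lemma fact_neq0 n : (n`!)%:R != 0 :> CC.
Proof. by rewrite pnatr_eq0 -lt0n fact_gt0. Qed.

Lemma gbinom0 x : gbinom x 0 = 1.
Proof. by rewrite /gbinom big_ord0 fact0 divr1. Qed.

Lemma gbinomS x j : gbinom x j.+1 = gbinom x j * (x - j%:R) / j.+1%:R.
Proof.
rewrite /gbinom big_ord_recr /= factS natrM invfM.
have := fact_neq0 j; have := natS_neq0 j; rewrite -natr1 => h1 h2.
by field; rewrite h1 h2.
Qed.

Lemma gbinom_pascal x j : gbinom (x + 1) j.+1 = gbinom x j.+1 + gbinom x j.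
Proof.
elim: j => [|j IH]; first by rewrite !gbinomS !gbinom0; field.
rewrite gbinomS IH !gbinomS.
have := natS_neq0 j; have := natS_neq0 j.+1; rewrite -!natr1 => h1 h2.
by field; rewrite h1 h2.
Qed.

Lemma gbinom_nat (n j : nat) : gbinom n%:R j = 'C(n, j)%:R.
Proof.
have gbinom0S k : gbinom 0 k.+1 = 0.
  by elim: k => [|k IH]; rewrite gbinomS ?IH ?gbinom0 ?subrr !(mulr0, mul0r).
elim: n j => [|n IH] [|j]; rewrite ?gbinom0 ?bin0 ?gbinom0S ?bin0n //.
by rewrite -natr1 gbinom_pascal !IH binS natrD.
Qed.

Lemma gbinomN1 j : gbinom (-1) j = (-1) ^+ j.
Proof.
elim: j => [|j IH]; first by rewrite gbinom0.
rewrite gbinomS IH exprS; have := natS_neq0 j; rewrite -natr1 => h.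
by field.
Qed.

Lemma gbinomN2 j : gbinom (-2) j = (-1) ^+ j * j.+1%:R.
Proof.
elim: j => [|j IH]; first by rewrite gbinom0 mulr1.
rewrite gbinomS IH exprS; have := natS_neq0 j; rewrite -!natr1 => h.
by field.
Qed.

Lemma sqrrN1 (k : nat) : (-1 : CC) ^+ k * (-1) ^+ k = 1.
Proof. by rewrite -exprD addnn -mul2n exprM sqrrN !expr1n. Qed.

Lemma gbinom_trinomial c i k :
  gbinom c i * gbinom (c - i%:R) k = gbinom c (i + k) * 'C(i + k, i)%:R.
Proof.
rewrite /gbinom big_split_ord /=.
have := bin_fact (leq_addr k i); rewrite addKn => hb.
have -> : \prod_(t < k) (c - i%:R - t%:R) = \prod_(t < k) (c - (i + t)%:R).
  by apply: eq_bigr => t _; rewrite natrD opprD addrA.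
have := fact_neq0 (i + k); rewrite -hb !natrM !mulf_eq0 negb_or => /andP[hC _].
have := fact_neq0 i; have := fact_neq0 k => h1 h2.
by field; rewrite h1 h2.
Qed.

Lemma sum_binom_alt q : \sum_(i < q.+1) 'C(q, i)%:R * (-1) ^+ (q - i) = (q == 0)%N%:R :> CC.
Proof.
have := exprDn (-1 : CC) 1 q; rewrite addNr expr0n => ->.
by apply: eq_bigr => i _; rewrite expr1n mulr1 mulr_natl.
Qed.

Lemma sum_gbinom_alt c q :
  \sum_(i < q.+1) gbinom c i * gbinom (c - i%:R) (q - i) * (-1) ^+ (q - i)
  = (q == 0)%N%:R.
Proof.
transitivity (gbinom c q * \sum_(i < q.+1) 'C(q, i)%:R * (-1) ^+ (q - i)).
  rewrite mulr_sumr; apply: eq_bigr => i _.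
  by rewrite gbinom_trinomial subnKC ?mulrA // -ltnS.
by rewrite sum_binom_alt; case: q => [|q]; rewrite ?gbinom0 ?mulr1 ?mulr0.
Qed.

Lemma sum_gbinom_alt1 c p :
  \sum_(i < p.+1) gbinom c i * gbinom (c - 1 - i%:R) (p - i) * (-1) ^+ (p - i) = 1.
Proof.
elim: p => [|p IH]; first by rewrite big_ord1 subnn !gbinom0 !mulr1.
rewrite big_ord_recr /= subnn gbinom0 expr0 !mulr1.
have pascal (i : 'I_p.+1) :
    gbinom c i * gbinom (c - 1 - i%:R) (p.+1 - i) * (-1) ^+ (p.+1 - i)
  = gbinom c i * gbinom (c - i%:R) (p.+1 - i) * (-1) ^+ (p.+1 - i)
  + gbinom c i * gbinom (c - 1 - i%:R) (p - i) * (-1) ^+ (p - i).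
  have -> : c - i%:R = c - 1 - i%:R + 1 by rewrite addrAC subrK.
  rewrite subSn; last by rewrite -ltnS.
  by rewrite gbinom_pascal exprS; ring.
rewrite (eq_bigr _ (fun i _ => pascal i)) big_split /= IH.
have := sum_gbinom_alt c p.+1; rewrite big_ord_recr /= subnn gbinom0 expr0 !mulr1.
by move=> alt; rewrite addrAC alt add0r.
Qed.

Lemma negint_natB1 (m p : nat) : `[< negint (m%:R - 1 - p%:R) >] = (m <= p)%N.
Proof.
apply: asbool_equiv_eqP idP _; split => [[k e]|le_mp].
  suff : (m + k.+1)%N = p.+1 by lia.
  apply/eqP; rewrite -(eqr_nat CC) natrD.
  have -> : k.+1%:R = - (m%:R - 1 - p%:R) :> CC by rewrite e opprK.
  by apply/eqP; rewrite -natr1; ring.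
by exists (p - m)%N; rewrite -natr1 natrB //; ring.
Qed.

Definition nonint (c : CC) := forall z : int, c != z%:~R.

Lemma not_negintP c : ~ negint c -> (exists m : nat, c = m%:R) \/ nonint c.
Proof.
move=> hc; case: (pselect (exists z : int, c = z%:~R)) => [[[m|k] e]|H].
- by left; exists m.
- by exfalso; apply: hc; exists k; rewrite e.
- by right => z; apply/eqP => e; apply: H; exists z.
Qed.

Lemma nonint_addn c (j : nat) : nonint c -> nonint (c + j%:R).
Proof.
move=> H z; apply: contraNneq (H (z - j%:Z)) => e.
by rewrite rmorphB /= -e addrK.
Qed.

Lemma nonint_subn1 c (i : nat) : nonint c -> nonint (c - 1 - i%:R).
Proof.
move=> H z; apply: contraNneq (H (z + 1 + i%:Z)) => e.
by apply/eqP; rewrite !rmorphD /= -e; ring.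
Qed.

Lemma nonint_negint c : nonint c -> ~ negint c.
Proof. by move=> H [k e]; have := H (- (k.+1)%:Z); rewrite e rmorphN /= eqxx. Qed.

Lemma sum_gbinom_alt1_nat (m p : nat) :
  \sum_(i < p.+1) (if (i < m)%N then
     gbinom m%:R i * gbinom (m%:R - 1 - i%:R) (p - i) * (-1) ^+ (p - i) else 0)
  = (p < m)%N%:R.
Proof.
pose F i := gbinom m%:R i * gbinom (m%:R - 1 - i%:R) (p - i) * (-1) ^+ (p - i).
have total : \sum_(i < p.+1) F i = 1 := sum_gbinom_alt1 m%:R p.
have [lt_pm|le_mp] := ltnP p m.
  transitivity (\sum_(i < p.+1) F i); last by rewrite total.
  apply: eq_bigr => i _; rewrite ifT //.
  by apply: leq_ltn_trans lt_pm; rewrite -ltnS.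
have Fm : F m = 1.
  by rewrite /F gbinom_nat binn mul1r addrAC subrr add0r gbinomN1 sqrrN1.
have F_gt i : (m < i)%N -> F i = 0.
  by move=> lt_mi; rewrite /F gbinom_nat bin_small ?mul0r.
have tail : \sum_(i < p.+1) (if (i < m)%N then 0 else F i) = 1.
  have le_mpS : (m < p.+1)%N by [].
  rewrite (bigD1 (Ordinal le_mpS)) //= ltnn Fm big1 ?addr0 // => i ne_im.
  case: ltnP => // le_mi; apply: F_gt; rewrite ltn_neqAle le_mi andbT.
  by apply: contra ne_im => /eqP e; apply/eqP/val_inj.
have split_m i : F i = (if (i < m)%N then F i else 0) + (if (i < m)%N then 0 else F i).
  by case: ifP; rewrite ?addr0 ?add0r.
move: total; rewrite (eq_bigr _ (fun (i : 'I_p.+1) _ => split_m i)) big_split /= tail.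
by move/(canRL (addrK 1)); rewrite subrr.
Qed.

Lemma sum_gbinom_alt1_trunc c p : ~ negint c ->
  \sum_(i < p.+1) (if `[< negint (c - 1 - i%:R) >] then 0
                   else gbinom c i * gbinom (c - 1 - i%:R) (p - i) * (-1) ^+ (p - i))
  = if `[< negint (c - 1 - p%:R) >] then 0 else 1.
Proof.
move=> /not_negintP [[m ->]|hc].
  rewrite negint_natB1 leqNgt.
  have -> : (if ~~ (p < m)%N then 0 else 1 : CC) = (p < m)%N%:R by case: ltnP.
  rewrite -sum_gbinom_alt1_nat.
  by apply: eq_bigr => i _; rewrite negint_natB1 leqNgt; case: ltnP.
have hc1 i : `[< negint (c - 1 - i%:R) >] = false.
  exact/asboolF/nonint_negint/nonint_subn1.
rewrite hc1 -[RHS](sum_gbinom_alt1 c p).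
by apply: eq_bigr => i _; rewrite hc1.
Qed.

Lemma lpoly_nat (M : lmodType CC) (P : nat -> M) (m : nat) : lpoly P m%:R = P m.
Proof.
rewrite /lpoly (@fsum_single _ _ m) ?eqxx // => j ne_jm.
by rewrite ifF // eqr_nat; apply/eqP => e; apply: ne_jm.
Qed.

Lemma lpoly_nonint (M : lmodType CC) (P : nat -> M) c : nonint c -> lpoly P c = 0.
Proof.
by move=> hc; rewrite /lpoly fsum_eq0 // => j; rewrite ifF //; apply/negbTE/(hc j).
Qed.

Lemma lint_nat (M : lmodType CC) (G : nat -> CC -> M) (m : nat) :
  lint G m%:R = \sum_(i < m) gbinom m%:R i *: G i (m - i.+1)%N%:R.
Proof.
rewrite /lint (@fsumE _ _ m) => [|i le_mi]; first apply: eq_bigr => i _.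
  by rewrite negint_natB1 leqNgt ltn_ord /= natrB // -natr1 opprD addrA addrAC.
by rewrite negint_natB1 le_mi.
Qed.

Lemma sum_triangle (M : zmodType) (G : nat -> nat -> M) (N : nat) :
  \sum_(p < N) \sum_(i < p.+1) G i (p - i)%N = \sum_(i < N) \sum_(k < N - i) G i k.
Proof.
elim: N => [|N IH]; first by rewrite !big_ord0.
rewrite big_ord_recr /= IH [RHS]big_ord_recr /= subSnn big_ord1.
rewrite big_ord_recr /= subnn addrA; congr (_ + _).
rewrite -big_split; apply: eq_bigr => i _ /=.
by rewrite subSn ?big_ord_recr //= ltnW.
Qed.

Lemma sum_antidiagonal (M : zmodType) (G : nat -> nat -> M) (N : nat) :
  (forall i k, (N <= i + k)%N -> G i k = 0) ->
  \sum_(i < N) \sum_(k < N) G i k = \sum_(p < N) \sum_(i < p.+1) G i (p - i)%N.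
Proof.
move=> G0; rewrite sum_triangle; apply: eq_bigr => i _.
rewrite (big_ord_widen N (G i) (leq_subr i N)) [RHS]big_mkcond /=.
apply: eq_bigr => k _; case: ltnP => // le_k; apply: G0.
by rewrite -(leq_add2l i) subnKC // ltnW in le_k.
Qed.

Lemma sum_shift (M : zmodType) (f : nat -> M) (m N : nat) :
  (forall p, (N <= p)%N -> f p = 0) ->
  \sum_(l < N) f (m + l)%N = \sum_(p < N | (m <= p)%N) f p.
Proof.
move=> f0.
have -> : \sum_(p < N | (m <= p)%N) f p = \sum_(p < N + m | (m <= p)%N) f p.
  rewrite (big_ord_widen_cond _ _ _ (leq_addr m N)) [LHS]big_mkcond [RHS]big_mkcond.
  apply: eq_bigr => p _; case: (ltnP p N) => [_|/f0 ->]; first by rewrite andbT.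
  by rewrite andbF; case: ifP.
transitivity (\sum_(m <= p < N + m) f p); last by rewrite big_geq_mkord.
rewrite -{2}[m]add0n big_addn addnK big_mkord.
by apply: eq_bigr => l _; rewrite addnC.
Qed.

Section Linear.
Variables (A B : lmodType CC) (f : A -> B).
Hypothesis f_lin : lin f.

Lemma lin0 : f 0 = 0.
Proof.
have := f_lin 1 0 0; rewrite !scale1r addr0 => f00.
by apply: (addrI (f 0)); rewrite addr0 -f00.
Qed.

Lemma linD x y : f (x + y) = f x + f y.
Proof. by have := f_lin 1 x y; rewrite !scale1r. Qed.

Lemma linZ s x : f (s *: x) = s *: f x.
Proof. by have := f_lin s x 0; rewrite !addr0 lin0 addr0. Qed.

Lemma linN x : f (- x) = - f x.
Proof. by rewrite -scaleN1r linZ scaleN1r. Qed.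

Lemma lin_sum n (F : 'I_n -> A) : f (\sum_(i < n) F i) = \sum_(i < n) f (F i).
Proof.
elim: n F => [|n IH] F; first by rewrite !big_ord0 lin0.
by rewrite !big_ord_recr /= linD IH.
Qed.
End Linear.
Arguments lin0 {A B f}.
Arguments linZ {A B f}.
Arguments linN {A B f}.
Arguments lin_sum {A B f}.

Lemma Tdiv0 (A : lmodType CC) (T : A -> A) j : lin T -> Tdiv T j 0 = 0.
Proof.
move=> T_lin; rewrite /Tdiv; suff -> : iter j T 0 = 0 by rewrite scaler0.
by elim: j => // j IH; rewrite iterS IH (lin0 T_lin).
Qed.
Arguments Tdiv0 {A T j}.

Section LambdaCalculus.
Variable M : lmodType CC.
Implicit Types (W : nat -> CC -> M) (c : CC) (N : nat).

(* Reindexing by [p = i + k], the weight of [W p] is the sum of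
   [sum_gbinom_alt1_trunc]. *)
Lemma lint_convolution W c N : ~ negint c ->
  (forall p x, (N <= p)%N -> W p x = 0) ->
  lint (fun i e => fsum (fun k => (gbinom e k * (-1) ^+ k) *: W (i + k)%N (e - k%:R))) c
  = \sum_(p < N) (if `[< negint (c - 1 - p%:R) >] then 0 else W p (c - 1 - p%:R)).
Proof.
move=> hc W0; pose Z p := W p (c - 1 - p%:R).
pose coef i k : CC := if `[< negint (c - 1 - i%:R) >] then 0
                     else gbinom c i * gbinom (c - 1 - i%:R) k * (-1) ^+ k.
rewrite /lint (@fsumE _ _ N) => [|i le_Ni]; last first.
  case: ifP => // _; rewrite fsum_eq0 ?scaler0 // => k.
  by rewrite W0 ?scaler0 // (leq_trans le_Ni) ?leq_addr.
transitivity (\sum_(i < N) \sum_(k < N) coef i k *: Z (i + k)%N).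
  apply: eq_bigr => i _; rewrite /coef; case: ifP => _.
    by rewrite big1 // => k _; rewrite scale0r.
  rewrite (@fsumE _ _ N) => [|k le_Nk]; last first.
    by rewrite W0 ?scaler0 // (leq_trans le_Nk) ?leq_addl.
  rewrite scaler_sumr; apply: eq_bigr => k _.
  by rewrite scalerA !mulrA /Z natrD opprD addrA.
rewrite (@sum_antidiagonal _ (fun i k => coef i k *: Z (i + k)%N)) => [|i k le_N]; last first.
  by rewrite /Z W0 ?scaler0.
apply: eq_bigr => p _.
transitivity ((\sum_(i < p.+1) coef i (p - i)%N) *: Z p).
  by rewrite scaler_suml; apply: eq_bigr => i _; rewrite subnKC // -ltnS.
by rewrite sum_gbinom_alt1_trunc //; case: ifP; rewrite ?scale0r ?scale1r.
Qed.

Lemma lpoly_tail W c N : ~ negint c ->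
  (forall p x, (N <= p)%N -> W p x = 0) ->
  lpoly (fun i => fsum (fun l => W (i + l)%N (- 1 - l%:R))) c
  = \sum_(p < N) (if `[< negint (c - 1 - p%:R) >] then W p (c - 1 - p%:R) else 0).
Proof.
move=> /not_negintP [[m ->]|hc] W0; last first.
  rewrite lpoly_nonint // big1 // => p _.
  by rewrite asboolF //; apply/nonint_negint/nonint_subn1.
rewrite lpoly_nat (@fsumE _ _ N) => [|l le_Nl]; last first.
  by rewrite W0 // (leq_trans le_Nl) ?leq_addl.
under [RHS]eq_bigr do rewrite negint_natB1.
rewrite -big_mkcond -(@sum_shift _ (fun p => W p (m%:R - 1 - p%:R))) => [|p /W0 -> //].
by apply: eq_bigr => l _; rewrite natrD; congr (W _ _); ring.
Qed.

Lemma lpoly_tail_add_lint W c N : ~ negint c ->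
  (forall p x, (N <= p)%N -> W p x = 0) ->
  lpoly (fun i => fsum (fun l => W (i + l)%N (- 1 - l%:R))) c
  + lint (fun i e => fsum (fun k => (gbinom e k * (-1) ^+ k) *: W (i + k)%N (e - k%:R))) c
  = \sum_(p < N) W p (c - 1 - p%:R).
Proof.
move=> hc W0; rewrite (lpoly_tail _ _ _ hc W0) (lint_convolution _ _ _ hc W0) -big_split.
by apply: eq_bigr => p _ /=; case: ifP; rewrite ?addr0 ?add0r.
Qed.

Lemma fsum_lpoly_shift (M' : lmodType CC) (F : nat -> M -> M') (P : nat -> M) c :
  ~ negint c -> (forall j, F j 0 = 0) ->
  fsum (fun j => F j (lpoly P (c + j%:R)))
  = lpoly (fun i => fsum (fun j => F j (P (i + j)%N))) c.
Proof.
move=> /not_negintP [[m ->]|hc] F0.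
  by rewrite lpoly_nat; congr fsum; apply: funext => j; rewrite -natrD lpoly_nat.
rewrite lpoly_nonint // fsum_eq0 // => j.
by rewrite lpoly_nonint ?F0 //; apply: nonint_addn.
Qed.
End LambdaCalculus.
Arguments lpoly_tail_add_lint {M W c N}.
Arguments fsum_lpoly_shift {M M'}.

Section Module.
Variables (V : lmodType CC) (vac : V) (T : V -> V) (Y : V -> int -> V -> V).
Variables (M : lmodType CC) (TM : M -> M) (YM : V -> int -> M -> M).
Hypothesis HM : is_va_module vac Y TM YM.

Lemma mode_trunc v c : exists N : nat, forall j, (N <= j)%N -> YM v j%:Z c = 0.
Proof.
case: HM => _ _ _ trunc _; have [N N_trunc] := trunc v c.
by exists (absz N) => j le_Nj; apply: N_trunc; lia.
Qed.

Lemma mode0r v n : YM v n 0 = 0.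
Proof. by case: HM => _ _ YM_lin _ _; apply: (lin0 (YM_lin _ _)). Qed.

Hypothesis HV : is_vertex_algebra vac T Y.

Lemma translation_vac v : T v = Y v (-2) vac.
Proof.
case: HV => _ _ Y_lin _ [_ vac_creation Tvac covariance _].
have := covariance v vac (-1); rewrite Tvac (lin0 (Y_lin _ _)) subr0.
by rewrite (proj1 (vac_creation v)) rmorphN /= opprK scale1r.
Qed.

Lemma mode_translation v n c : YM (T v) n c = - n%:~R *: YM v (n - 1) c.
Proof.
case: HM => _ _ _ _ [vac_mode _ borcherds].
(* Only the vacuum modes of index -1 survive in (I2) at (a, n, m) = (vac, -2, 0). *)
have := borcherds v vac c (-2) 0 n.
rewrite [RHS](@fsum_single _ _ 0) => [|[|j] //]; last by rewrite gbinom_nat bin0n scale0r.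
rewrite gbinom0 scale1r addr0 subr0 !add0r -translation_vac => <-.
have sign_coef j : (-1) ^+ j * gbinom (-2)%:~R j = j.+1%:R.
  by rewrite rmorphN /= gbinomN2 mulrA sqrrN1 mul1r.
have sqrN1z : (-1 : CC) ^ (-2) = 1.
  by rewrite -[-2]/(Negz 1) /exprz sqrrN expr1n invr1.
case: n => [[|K]|K].
- rewrite fsum_eq0 ?oppr0 ?scale0r // => j.
  rewrite !vac_mode; do 2![case: eqP => ?; first lia].
  by rewrite mode0r !scaler0 subrr scaler0.
- rewrite (@fsum_single _ _ K) => [|j ne_jK]; last first.
    rewrite !vac_mode; do 2![case: eqP => ?; first lia].
    by rewrite mode0r !scaler0 subrr scaler0.
  rewrite !vac_mode; case: eqP => ?; first lia; case: eqP => ?; last lia.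
  rewrite mode0r sub0r sign_coef sqrN1z scale1r scalerN -scaleNr.
  by congr (_ *: YM v _ c); lia.
- rewrite (@fsum_single _ _ K) => [|j ne_jK]; last first.
    rewrite !vac_mode; do 2![case: eqP => ?; first lia].
    by rewrite mode0r !scaler0 subrr scaler0.
  rewrite !vac_mode; case: eqP => ?; last lia; case: eqP => ?; first lia.
  rewrite !scaler0 subr0 sign_coef NegzE rmorphN opprK.
  by congr (_ *: YM v _ c); lia.
Qed.

Lemma mode_iter_translation j v n c :
  YM (iter j T v) n c = (\prod_(i < j) (- (n%:~R - i%:R))) *: YM v (n - j%:Z) c.
Proof.
elim: j v => [|j IH] v; first by rewrite big_ord0 scale1r subr0.
rewrite iterSr IH mode_translation big_ord_recr /= scalerA rmorphB /=.
by congr (_ *: YM v _ c); lia.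
Qed.

Lemma mode_Tdiv_N1 v j c : YM (Tdiv T j v) (-1) c = YM v (-1 - j%:Z) c.
Proof.
case: HM => _ YM_lin_l _ _ _.
rewrite /Tdiv (linZ (YM_lin_l _ _)) mode_iter_translation scalerA.
have -> : \prod_(i < j) (- ((-1 : int)%:~R - i%:R)) = j`!%:R :> CC.
  elim: j => [|j IH]; first by rewrite big_ord0.
  by rewrite big_ord_recr /= IH factS natrM mulrC -natr1 rmorphN /=; ring.
by rewrite mulVf ?scale1r ?fact_neq0.
Qed.
End Module.
Arguments mode_trunc {V vac Y M TM YM}.
Arguments mode0r {V vac Y M TM YM}.
Arguments mode_Tdiv_N1 {V vac T Y M TM YM}.

Section Intertwining.
Variables (S : set CC) (V : lmodType CC) (M1 M2 M3 : lmodType CC).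
Variables (T1 : M1 -> M1) (T2 : M2 -> M2) (T3 : M3 -> M3).
Variables (Y1 : V -> int -> M1 -> M1) (Y2 : V -> int -> M2 -> M2).
Variables (Y3 : V -> int -> M3 -> M3) (io : M1 -> CC -> M2 -> M3).
Hypothesis Hio : is_intertwining S T1 T2 T3 Y1 Y2 Y3 io.

Lemma io0l n b : io 0 n b = 0.
Proof. by case: Hio => io_lin_l _ _ _ _; apply: (lin0 (io_lin_l _ _)). Qed.

Lemma io0r a n : io a n 0 = 0.
Proof. by case: Hio => _ io_lin_r _ _ _; apply: (lin0 (io_lin_r _ _)). Qed.

Lemma io_iter_translation l x n b :
  io (iter l T1 x) n b = (\prod_(i < l) (- (n - i%:R))) *: io x (n - l%:R) b.
Proof.
case: Hio => _ _ _ translation _.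
elim: l x => [|l IH] x; first by rewrite big_ord0 scale1r subr0.
rewrite iterSr IH (proj2 (translation _ _ _)) big_ord_recr /= scalerA.
by congr (_ *: io x _ b); rewrite -natr1; ring.
Qed.

Lemma io_Tdiv l x n b :
  io (Tdiv T1 l x) n b = ((-1) ^+ l * gbinom n l) *: io x (n - l%:R) b.
Proof.
case: Hio => io_lin_l _ _ _ _.
rewrite /Tdiv (linZ (io_lin_l _ _)) io_iter_translation scalerA prodrN card_ord /gbinom.
by congr (_ *: _); ring.
Qed.

Lemma io_Tdiv_N1 l x b : io (Tdiv T1 l x) (-1) b = io x (-1 - l%:R) b.
Proof. by rewrite io_Tdiv gbinomN1 sqrrN1 scale1r. Qed.

Lemma io_trunc a b c : exists N : nat, forall j, (N <= j)%N -> io a (c + j%:R) b = 0.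
Proof.
case: Hio => _ _ exponents _ _; have [ds [_ ds_exp]] := exponents a b.
suff [N N_ds] : exists N : nat, forall j, (N <= j)%N ->
    forall d, d \in ds -> forall k : nat, d - 1 - c != (j + k)%N%:R.
  exists N => j le_Nj; apply/eqP; apply: contraT => /ds_exp [d d_ds [k e]].
  have := N_ds j le_Nj d d_ds k; rewrite natrD.
  have -> : d - 1 - c = (- (c + j%:R) - 1) - (- d + k%:R) + j%:R + k%:R by ring.
  by rewrite e subrr add0r eqxx.
elim: ds {ds_exp} => [|d ds [N N_ds]]; first by exists 0%N.
case: (pselect (exists m : nat, d - 1 - c = m%:R)) => [[m d_m]|d_nonnat].
- exists (maxn N m.+1) => j; rewrite geq_max => /andP[le_Nj lt_mj] d'.
  rewrite in_cons => /predU1P[-> k|]; last exact: N_ds.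
  by rewrite d_m eqr_nat; apply: contraTneq lt_mj => ->; rewrite -leqNgt leq_addr.
- exists N => j le_Nj d'; rewrite in_cons => /predU1P[-> k|]; last exact: N_ds.
  by apply/eqP => e; apply: d_nonnat; exists (j + k)%N.
Qed.

Lemma io_commutator v a b (m : int) k :
  Y3 v m (io a k b) - io a k (Y2 v m b)
  = fsum (fun j => gbinom m%:~R j *: io (Y1 v j a) (m%:~R + k - j%:R) b).
Proof.
case: Hio => _ _ _ _ borcherds; have := borcherds v a b 0 m k.
rewrite (@fsum_single _ _ 0) => [|[|j] // _]; last by rewrite gbinom_nat bin0n mulr0 scale0r.
rewrite gbinom0 expr0 mulr1 scale1r expr0z scale1r !addr0 !subr0 add0r => ->.
by congr fsum; apply: funext => j; rewrite add0r.
Qed.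

Lemma io_normal_product v a b c :
  io (Y1 v (-1) a) c b
  = fsum (fun j => Y3 v (-1 - j%:Z) (io a (c + j%:R) b) + io a (c - 1 - j%:R) (Y2 v j b)).
Proof.
case: Hio => _ _ _ _ borcherds; have := borcherds v a b (-1) 0 c.
rewrite [RHS](@fsum_single _ _ 0) => [|[|j] // _]; last by rewrite gbinom_nat bin0n scale0r.
rewrite gbinom0 scale1r addr0 subr0 mulr0z !add0r => <-.
congr fsum; apply: funext => j.
have -> : (-1 : CC) ^ (-1) = -1 by rewrite -[-1 : int]/(Negz 0) /exprz expr1 invrN1.
rewrite rmorphN /= gbinomN1 sqrrN1 scale1r scaleN1r opprK.
by congr (_ + io a _ _); ring.
Qed.
End Intertwining.
Arguments io0l {S V M1 M2 M3 T1 T2 T3 Y1 Y2 Y3 io}.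
Arguments io0r {S V M1 M2 M3 T1 T2 T3 Y1 Y2 Y3 io}.
Arguments io_Tdiv {S V M1 M2 M3 T1 T2 T3 Y1 Y2 Y3 io}.
Arguments io_Tdiv_N1 {S V M1 M2 M3 T1 T2 T3 Y1 Y2 Y3 io}.
Arguments io_trunc {S V M1 M2 M3 T1 T2 T3 Y1 Y2 Y3 io}.
Arguments io_commutator {S V M1 M2 M3 T1 T2 T3 Y1 Y2 Y3 io}.
Arguments io_normal_product {S V M1 M2 M3 T1 T2 T3 Y1 Y2 Y3 io}.

Section Brackets.
Variables (S : set CC) (V : lmodType CC) (vac : V) (T : V -> V) (Y : V -> int -> V -> V).
Variables (M1 M2 M3 : lmodType CC).
Variables (T1 : M1 -> M1) (Y1 : V -> int -> M1 -> M1).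
Variables (T2 : M2 -> M2) (Y2 : V -> int -> M2 -> M2).
Variables (T3 : M3 -> M3) (Y3 : V -> int -> M3 -> M3).
Variable io : M1 -> CC -> M2 -> M3.
Hypothesis Hio : is_intertwining S T1 T2 T3 Y1 Y2 Y3 io.

Lemma vbr_io_mul v a b :
  lexpr_eq
    (lpoly (vbr Y3 v (io a (-1) b)))
    (fun c => lpoly (fun j => io a (-1) (vbr Y2 v b j)) c
            + lpoly (fun j => io (vbr Y1 v a j) (-1) b) c
            + lint (fun i => lpoly (iobr0 io (vbr Y1 v a i) b)) c).
Proof.
move=> c /not_negintP [[m ->]|hc]; last first.
  rewrite !lpoly_nonint // /lint fsum_eq0 ?addr0 // => i.
  by rewrite lpoly_nonint ?scaler0 ?if_same //; apply: nonint_subn1.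
rewrite !lpoly_nat lint_nat /vbr /iobr0; under eq_bigr do rewrite lpoly_nat.
have := io_commutator Hio v a b m (-1).
rewrite (@fsumE _ _ m.+1) => [|j lt_mj]; last by rewrite gbinom_nat bin_small ?scale0r.
rewrite big_ord_recr /= gbinom_nat binn scale1r => /eqP; rewrite subr_eq => /eqP ->.
have -> : m%:~R - 1 - m%:R = -1 :> CC by rewrite addrAC subrr add0r.
rewrite [RHS]addrC [io a _ _ + _]addrC addrA; congr (_ + _ + _).
by apply: eq_bigr => i _; rewrite natrB // -natr1 opprD addrA addrAC.
Qed.

Hypothesis HV : is_vertex_algebra vac T Y.
Hypotheses (HM1 : is_va_module vac Y T1 Y1) (HM2 : is_va_module vac Y T2 Y2).
Hypothesis HM3 : is_va_module vac Y T3 Y3.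

Lemma iobr_mul_l v a b :
  lexpr_eq
    (iobr io (Y1 v (-1) a) b)
    (fun c => eTd T (fun x y => Y3 x (-1) y) v (iobr io a b) c
            + eTd T1 (fun x y => io x (-1) y) a (lpoly (vbr Y2 v b)) c
            + lint (iobr_mu io a (vbr_lm Y2 v b)) c).
Proof.
move=> c hc.
have [Na Na_trunc] := io_trunc Hio a b c.
have [Nb Nb_trunc] := mode_trunc HM2 v b.
pose N := (Na + Nb)%N; pose W p x := io a x (Y2 v p b).
have W0 p x : (N <= p)%N -> W p x = 0.
  by move=> le_Np; rewrite /W Nb_trunc ?(io0r Hio) //; lia.
have Y3_trunc j : (N <= j)%N -> Y3 v (-1 - j%:Z) (io a (c + j%:R) b) = 0.
  by move=> le_Nj; rewrite Na_trunc ?(mode0r HM3) //; lia.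
rewrite /iobr (io_normal_product Hio) (@fsumE _ _ N) => [|j le_Nj]; last first.
  by rewrite Y3_trunc // Nb_trunc ?(io0r Hio) ?addr0 //; lia.
rewrite big_split /= -addrA; congr (_ + _).
  rewrite /eTd (@fsumE _ _ N) => [|j le_Nj]; last by rewrite (mode_Tdiv_N1 HM3 HV) Y3_trunc.
  by apply: eq_bigr => j _; rewrite (mode_Tdiv_N1 HM3 HV).
rewrite -(lpoly_tail_add_lint hc W0); congr (_ + _).
  transitivity (fsum (fun j => io a (-1 - j%:R) (lpoly (vbr Y2 v b) (c + j%:R)))).
    by rewrite (fsum_lpoly_shift (fun j x => io a (-1 - j%:R) x)) // => j; exact: (io0r Hio).
  by congr fsum; apply: funext => j; rewrite (io_Tdiv_N1 Hio).
congr lint; apply: funext => i; apply: funext => e; rewrite /iobr_mu.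
congr fsum; apply: funext => k; rewrite /vbr_lm /W.
by case: Hio => _ io_lin_r _ _ _; rewrite (linZ (io_lin_r _ _)) scalerA.
Qed.

Lemma io_abr_v a v b i e :
  io (abr_v T1 Y1 a v i) e b
  = fsum (fun l => (gbinom e l * (-1) ^+ l) *:
                   - ((-1) ^+ (i + l)%N *: io (Y1 v (i + l)%N a) (e - l%:R) b)).
Proof.
have [N N_trunc] := mode_trunc HM1 v a.
have [T1_lin _ _ _ _] := HM1; have [io_lin_l _ _ _ _] := Hio.
have trunc_il l : (N <= l)%N -> Y1 v (i + l)%N a = 0.
  by move=> le_Nl; rewrite N_trunc // (leq_trans le_Nl) ?leq_addl.
rewrite /abr_v (@fsumE _ _ N) => [|l /trunc_il ->]; last by rewrite (Tdiv0 T1_lin) scaler0.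
rewrite [RHS](@fsumE _ _ N) => [|l /trunc_il ->]; last first.
  by rewrite (io0l Hio) scaler0 oppr0 scaler0.
rewrite (linN (io_lin_l _ _)) (lin_sum (io_lin_l _ _)) -sumrN.
apply: eq_bigr => l _; rewrite (linZ (io_lin_l _ _)) (io_Tdiv Hio) !scalerA scalerN.
by rewrite [in RHS]scalerA; congr (- (_ *: _)); ring.
Qed.

Lemma iobr_mul_r v a b :
  lexpr_eq
    (iobr io a (Y2 v (-1) b))
    (fun c => Y3 v (-1) (iobr io a b c)
            + lpoly (fun i => io (abr_v T1 Y1 a v i) (-1) b) c
            + lint (fun i => iobr io (abr_v T1 Y1 a v i) b) c).
Proof.
move=> c hc.
have [N N_trunc] := mode_trunc HM1 v a.
pose W p x := - ((-1) ^+ p *: io (Y1 v p a) x b).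
have W0 p x : (N <= p)%N -> W p x = 0.
  by move=> /N_trunc; rewrite /W => ->; rewrite (io0l Hio) scaler0 oppr0.
have := io_commutator Hio v a b (-1) c.
move/eqP; rewrite subr_eq addrC -subr_eq => /eqP; rewrite /iobr => <-.
rewrite -addrA; congr (_ + _).
transitivity (\sum_(p < N) W p (c - 1 - p%:R)).
  rewrite (_ : (-1 : int)%:~R = -1 :> CC) //.
  rewrite (@fsumE _ _ N) => [|j /N_trunc ->]; last by rewrite (io0l Hio) scaler0.
  rewrite -sumrN; apply: eq_bigr => j _; rewrite /W gbinomN1.
  by congr (- (_ *: io _ _ _)); ring.
rewrite -(lpoly_tail_add_lint hc W0); congr (lpoly _ _ + lint _ _).
  apply: funext => i; rewrite io_abr_v; congr fsum; apply: funext => l.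
  by rewrite gbinomN1 sqrrN1 scale1r.
by apply: funext => i; apply: funext => e; rewrite /iobr io_abr_v.
Qed.
End Brackets.
Arguments vbr_io_mul {S V M1 M2 M3 T1 Y1 T2 Y2 T3 Y3 io}.
Arguments iobr_mul_l {S V vac T Y M1 M2 M3 T1 Y1 T2 Y2 T3 Y3 io}.
Arguments iobr_mul_r {S V vac Y M1 M2 M3 T1 Y1 T2 Y2 T3 Y3 io}.

Theorem proposition3p6
  (S : set CC) (HS : admissible_exponents S)
  (V : lmodType CC) (vac : V) (T : V -> V) (Y : V -> int -> V -> V)
  (HV : is_vertex_algebra vac T Y)
  (M1 M2 M3 : lmodType CC)
  (T1 : M1 -> M1) (Y1 : V -> int -> M1 -> M1) (HM1 : is_va_module vac Y T1 Y1)
  (T2 : M2 -> M2) (Y2 : V -> int -> M2 -> M2) (HM2 : is_va_module vac Y T2 Y2)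
  (T3 : M3 -> M3) (Y3 : V -> int -> M3 -> M3) (HM3 : is_va_module vac Y T3 Y3)
  (io : M1 -> CC -> M2 -> M3)
  (Hio : is_intertwining S T1 T2 T3 Y1 Y2 Y3 io) :
  forall (v : V) (a : M1) (b : M2),
  lexpr_eq
    (lpoly (vbr Y3 v (io a (-1) b)))
    (fun c => lpoly (fun j => io a (-1) (vbr Y2 v b j)) c
            + lpoly (fun j => io (vbr Y1 v a j) (-1) b) c
            + lint (fun i => lpoly (iobr0 io (vbr Y1 v a i) b)) c)
  /\
  lexpr_eq
    (iobr io (Y1 v (-1) a) b)
    (fun c => eTd T (fun x y => Y3 x (-1) y) v (iobr io a b) c
            + eTd T1 (fun x y => io x (-1) y) a (lpoly (vbr Y2 v b)) c
            + lint (iobr_mu io a (vbr_lm Y2 v b)) c)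
  /\
  lexpr_eq
    (iobr io a (Y2 v (-1) b))
    (fun c => Y3 v (-1) (iobr io a b c)
            + lpoly (fun i => io (abr_v T1 Y1 a v i) (-1) b) c
            + lint (fun i => iobr io (abr_v T1 Y1 a v i) b) c).
Proof.
move=> v a b; split; first exact: vbr_io_mul Hio v a b.
split; first exact: iobr_mul_l Hio HV HM2 HM3 v a b.
exact: iobr_mul_r Hio HM1 v a b.
Qed.
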